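(* For all $A,B\in[\mathbb{N}]^{<\omega}$ we have $d_{\mathrm{sum}}(A,B)=d_{\mathrm{I}}(A,B)$. Moreover, if $\#A=\#B=k$, then there is a path of length $d_{\mathrm{I}}(A,B)$ from $A$ to $B$ in the universal interlacing graph all of whose vertices lie in $[\mathbb{N}]^k$; consequently the restriction of $d_{\mathrm{I}}$ to $[\mathbb{N}]^k$ equals $d^{(k)}_{\mathrm{I}}$.
   Context: The universal interlacing graph has vertex set $[\mathbb{N}]^{<\omega}$ (finite subsets of $\mathbb{N}$, listed increasingly). Two vertices $A=\{a_1<\dots<a_n\}$ and $B=\{b_1<\dots<b_m\}$ with $A\ne B$ are adjacent iff one of: (i) $n=m+1$ and $a_i\le b_i\le a_{i+1}$ for $1\le i\le m$; (ii) $m=n+1$ and $b_i\le a_i\le b_{i+1}$ for $1\le i\le n$; (iii) $n=m$, $a_i\le b_i\le a_{i+1}$ for $1\le i<n$, and $a_n\le b_n$; (iv) $n=m$, $b_i\le a_i\le b_{i+1}$ for $1\le i<n$, and $b_n\le a_n$. Also $\emptyset$ is adjacent to every singleton. $d_{\mathrm{I}}$ is the shortest-path metric of this graph. For $k\in\mathbb{N}$, Kalton's interlacing graph on $[\mathbb{N}]^k$ (subsets of cardinality $k$) has edges given by (iii) or (iv), and $d^{(k)}_{\mathrm{I}}$ is its graph metric. The summing distance is $d_{\mathrm{sum}}(A,B)=\max\{|\#(A\cap E)-\#(B\cap E)|: E\text{ an interval of }\mathbb{N}\}$ (equivalently $\|\sum_{i\in A}s_i-\sum_{i\in B}s_i\|_{\mathrm{sum}}$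 with $\|\sum a_is_i\|_{\mathrm{sum}}=\sup_{k\le m}|\sum_{i=k}^m a_i|$). *)

From mathcomp Require Import all_boot.
Set Implicit Arguments. Unset Strict Implicit. Unset Printing Implicit Defensive.

(* A vertex of [N]^{<omega}: a finite subset of N = {1,2,...}, represented by
   the strictly increasing list of its elements. *)
Definition vertex (A : seq nat) : Prop :=
  sorted ltn A /\ all (fun x => 0 < x) A.


Definition interl_succ (A B : seq nat) : Prop :=
  size A = (size B).+1 /\
  forall i, i < size B -> nth 0 A i <= nth 0 B i /\ nth 0 B i <= nth 0 A i.+1.

Definition interl_same (A B : seq nat) : Prop :=
  size A = size B /\
  (forall i, i.+1 < size A -> nth 0 A i <= nth 0 B i /\ nth 0 B i <= nth 0 A i.+1) /\
  (0 < size A -> nth 0 A (size A).-1 <= nth 0 B (size A).-1).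

Definition adjI (A B : seq nat) : Prop :=
  A <> B /\
  (interl_succ A B \/ interl_succ B A \/ interl_same A B \/ interl_same B A \/
   (A = [::] /\ size B = 1) \/ (B = [::] /\ size A = 1)).

Definition adjK (A B : seq nat) : Prop :=
  A <> B /\ (interl_same A B \/ interl_same B A).

Fixpoint walk (V : seq nat -> Prop) (E : seq nat -> seq nat -> Prop)
    (A B : seq nat) (n : nat) : Prop :=
  match n with
  | 0 => V A /\ A = B
  | n'.+1 => V A /\ exists C, E A C /\ walk V E C B n'
  end.

Definition graph_dist (V : seq nat -> Prop) (E : seq nat -> seq nat -> Prop)
    (A B : seq nat) (d : nat) : Prop :=
  walk V E A B d /\ forall m, walk V E A B m -> d <= m.

Definition vertexk (k : nat) (A : seq nat) : Prop := vertex A /\ size A = k.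

Definition dI_is (A B : seq nat) (d : nat) : Prop := graph_dist vertex adjI A B d.
Definition dIk_is (k : nat) (A B : seq nat) (d : nat) : Prop :=
  graph_dist (vertexk k) adjK A B d.

Definition cnt_int (A : seq nat) (p q : nat) : nat :=
  count (fun x => (p <= x) && (x <= q)) A.

Definition absdiff (x y : nat) : nat := (x - y) + (y - x).

(* summing distance: max over intervals E of N of |#(A∩E) - #(B∩E)|.
   Every interval of N meets A ∪ B in the same set as some [p,q] with
   p, q <= M := max(A ∪ B) + 1 (empty interval gives 0), so the max over
   such p, q is the max over all intervals. *)
Definition dsum (A B : seq nat) : nat :=
  let M := (maxn (\max_(x <- A) x) (\max_(x <- B) x)).+2 in
  \max_(p < M) \max_(q < M) absdiff (cnt_int A p q) (cnt_int B p q).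

From mathcomp Require Import all_boot zify.
From Stdlib Require Import Classical.

Set Implicit Arguments. Unset Strict Implicit.

(* A finite set [A] of positive integers is encoded by its rank function
   [rank A x = #{a in A | a < x}], which determines [A] (rank_inj).  Two
   vertices interlace (conditions (i)-(iv)) exactly when one "covers" the
   other: [rank C <= rank A <= rank C + 1] pointwise (interl_same_covers,
   interl_succ_covers).  The summing distance [dsum A B] is the oscillation
   of [rank A - rank B], i.e. the least [m] with [osc_le A B m] (osc_le_dsum,
   dsum_osc_le).

   Lower bound: covering pairs have oscillation at most 1, and oscillation
   is subadditive along walks, so every walk from [A] to [B] has length at
   least [dsum A B] (walk_osc_le).
   Upper bound: if [rank A - rank B] is positive somewhere, lowering [rank A]
   by one exactly where that difference is maximal yields the rank function
   of a vertex [C] covered by [A], of the same size when [#A = #B], with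
   oscillation one smaller (descent).  Iterating gives a walk of length
   [dsum A B] (walk_of_osc_le), in the universal graph and in [ [N]^k ]. *)

Definition rank (s : seq nat) (x : nat) : nat := count (fun y => y < x) s.

Lemma rank0 s : rank s 0 = 0.
Proof. by elim: s. Qed.

Lemma rankS s x : uniq s -> rank s x.+1 = rank s x + (x \in s).
Proof.
move=> us; have e : (fun y => y < x.+1) =1 predU (pred1 x) (fun y => y < x).
  by move=> y; rewrite /= ltnS leq_eqVlt.
have disj : count (predI (pred1 x) (fun y => y < x)) s = 0.
  by rewrite (eq_count (a2 := pred0)) ?count_pred0 // => y /=; case: eqP => // ->; rewrite ltnn.
have := count_predUI (pred1 x) (fun y => y < x) s.
by rewrite disj addn0 addnC count_uniq_mem // /rank (eq_count e) => ->.
Qed.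

Lemma rank_mono s : {homo rank s : x y / x <= y}.
Proof. by move=> x y hxy; apply: sub_count => t /= ht; exact: leq_trans ht hxy. Qed.

Lemma rank_le_size s x : rank s x <= size s.
Proof. exact: count_size. Qed.

Lemma rank_full s K x : all (fun y => y < K) s -> K <= x -> rank s x = size s.
Proof.
move=> hs hK; apply/eqP; rewrite -all_count; apply/allP => y /(allP hs) hy.
exact: leq_trans hy hK.
Qed.

Lemma rank_pos s : all (fun y => 0 < y) s -> rank s 1 = 0.
Proof.
move=> hs; rewrite /rank (eq_in_count (a2 := pred0)) ?count_pred0 //.
by move=> y /(allP hs); case: y.
Qed.

Definition bound (s : seq nat) : nat := (\max_(y <- s) y).+1.

Lemma rank_bound s x : bound s <= x -> rank s x = size s.
Proof. by apply: rank_full; apply/allP => y hy; rewrite ltnS leq_bigmax_seq. Qed.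

Lemma rank_clamp s K x : bound s <= K -> rank s x = rank s (minn x K).
Proof.
move=> hK; case: (leqP x K) => hx //.
by rewrite !rank_bound // (leq_trans hK) // ltnW.
Qed.

Lemma ltn_rank s x i : sorted ltn s ->
  (i < rank s x) = (i < size s) && (nth 0 s i < x).
Proof.
elim: s i => [|a s IH] i //= hs.
have above_a : all (fun y => a < y) s := order_path_min ltn_trans hs.
rewrite /rank /= -/(rank s x); case: (ltnP a x) => hax.
  by case: i => [|i] //=; rewrite add1n ltnS IH // (path_sorted hs).
have -> : rank s x = 0.
  rewrite /rank (eq_in_count (a2 := pred0)) ?count_pred0 // => y /(allP above_a) /=.
  lia.
rewrite addn0; case: i => [|i] /=; first by rewrite [a < x]ltnNge hax.
rewrite ltnS; case: (ltnP i (size s)) => hi //=.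
by apply/esym/negbTE; rewrite -leqNgt (leq_trans hax) // ltnW // (allP above_a) // mem_nth.
Qed.

Lemma rank_shift A B s : sorted ltn A -> sorted ltn B ->
  (forall x, rank A x <= rank B x + s) <->
  (forall i, i + s < size A -> i < size B /\ nth 0 B i <= nth 0 A (i + s)).
Proof.
move=> sA sB; split=> [H i hi | H x].
  have : i + s < rank A (nth 0 A (i + s)).+1 by rewrite ltn_rank // hi ltnSn.
  move/leq_trans/(_ (H _)); rewrite ltn_add2r ltn_rank // => /andP[hiB].
  by rewrite ltnS.
rewrite leqNgt; apply/negP; rewrite ltn_rank // => /andP[/H[hB hle] hA].
have := ltn_rank x (rank B x) sB; rewrite ltnn hB /= => /esym/negbT.
by rewrite -leqNgt => hxB; lia.
Qed.

Lemma rank_inj A B : sorted ltn A -> sorted ltn B -> rank A =1 rank B -> A = B.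
Proof.
move=> sA sB eAB.
have [x hxA hxB] : exists2 x, bound A <= x & bound B <= x.
  by exists (maxn (bound A) (bound B)); rewrite ?leq_maxl ?leq_maxr.
have hs : size A = size B by rewrite -(rank_bound hxA) -(rank_bound hxB) eAB.
have leAB : forall x, rank A x <= rank B x + 0 by move=> y; rewrite eAB addn0.
have leBA : forall x, rank B x <= rank A x + 0 by move=> y; rewrite eAB addn0.
apply: (eq_from_nth (x0 := 0) hs) => i hi; apply/eqP; rewrite eqn_leq.
have hiA : i + 0 < size A by rewrite addn0.
have hiB : i + 0 < size B by rewrite addn0 -hs.
have [_ h1] := proj1 (rank_shift 0 sA sB) leAB i hiA.
have [_ h2] := proj1 (rank_shift 0 sB sA) leBA i hiB.
by rewrite addn0 in h1 h2; rewrite h1 h2.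
Qed.

Lemma rank_differs A B : sorted ltn A -> sorted ltn B -> A <> B ->
  (exists x, rank B x < rank A x) \/ (exists x, rank A x < rank B x).
Proof.
move=> sA sB hne.
case: (classic (exists x, rank B x < rank A x)) => [|noBA]; [by left | right].
apply: NNPP => noAB; apply: hne; apply: rank_inj => // x.
apply/eqP; rewrite eqn_leq; apply/andP; split; rewrite leqNgt; apply/negP => hlt.
- by apply: noBA; exists x.
- by apply: noAB; exists x.
Qed.

(* [A] covers [C]: the rank function of [A] lies between those of [C] and
   [C] plus one.  This is the rank-function form of interlacing. *)
Definition covers (A C : seq nat) : Prop :=
  forall x, rank C x <= rank A x /\ rank A x <= (rank C x).+1.

Lemma covers_size A C : covers A C -> size C <= size A /\ size A <= (size C).+1.
Proof.
move=> cAC; have [x hxA hxC] : exists2 x, bound A <= x & bound C <= x.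
  by exists (maxn (bound A) (bound C)); rewrite ?leq_maxl ?leq_maxr.
by rewrite -(rank_bound hxA) -(rank_bound hxC); apply: cAC.
Qed.

Lemma coversE A C : sorted ltn A -> sorted ltn C ->
  covers A C <->
  (forall i, i < size C -> i < size A /\ nth 0 A i <= nth 0 C i) /\
  (forall i, i.+1 < size A -> i < size C /\ nth 0 C i <= nth 0 A i.+1).
Proof.
move=> sA sC; have lo := rank_shift 0 sC sA; have hi := rank_shift 1 sA sC.
setoid_rewrite addn0 in lo; setoid_rewrite addn1 in hi.
split=> [cAC | [H0 H1] x]; last by split; [apply: (proj2 lo) | apply: (proj2 hi)].
by split; [apply/lo => x; case: (cAC x) | apply/hi => x; case: (cAC x)].
Qed.

Lemma interl_same_covers A C : sorted ltn A -> sorted ltn C ->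
  interl_same A C <-> covers A C /\ size A = size C.
Proof.
move=> sA sC; rewrite coversE //; split=> [[hs [H1 H2]] | [[H0 H1] hs]].
  split=> //; split=> i hi; last by split; [lia | case: (H1 i hi)].
  split; first by lia.
  case: (ltnP i.+1 (size A)) => [/H1[] // | hiA].
  have -> : i = (size A).-1 by lia.
  by apply: H2; lia.
split=> //; split=> [i hi | hA]; last by case: (H0 (size A).-1); lia.
by split; [case: (H0 i); lia | case: (H1 i hi)].
Qed.

Lemma interl_succ_covers A C : sorted ltn A -> sorted ltn C ->
  interl_succ A C <-> covers A C /\ size A = (size C).+1.
Proof.
move=> sA sC; rewrite coversE //; split=> [[hs H] | [[H0 H1] hs]].
  by split=> //; split=> i hi; (split; [lia | case: (H i); lia]).
by split=> // i hi; split; [case: (H0 i) | case: (H1 i)]; lia.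
Qed.

Lemma adjI_covers A C : sorted ltn A -> sorted ltn C -> adjI A C -> covers A C \/ covers C A.
Proof.
move=> sA sC [_ [h|[h|[h|[h|[[eA hC]|[eC hA]]]]]]].
- by left; case/(interl_succ_covers sA sC): h.
- by right; case/(interl_succ_covers sC sA): h.
- by left; case/(interl_same_covers sA sC): h.
- by right; case/(interl_same_covers sC sA): h.
- right; have h : interl_succ C A by rewrite eA; split=> // i; rewrite hC.
  by case/(interl_succ_covers sC sA): h.
- left; have h : interl_succ A C by rewrite eC; split=> // i; rewrite hA.
  by case/(interl_succ_covers sA sC): h.
Qed.

Lemma covers_adjI A C : sorted ltn A -> sorted ltn C -> covers A C -> A <> C ->
  adjI A C /\ adjI C A.
Proof.
move=> sA sC cAC hne; have [hCA hAC] := covers_size cAC.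
have neCA : C <> A by move/esym.
case: (eqVneq (size A) (size C)) => hs.
  have hI : interl_same A C by apply/interl_same_covers.
  by split; split=> //; right; right; [left | right; left].
have hI : interl_succ A C by apply/interl_succ_covers => //; split=> //; lia.
by split; split=> //; [left | right; left].
Qed.

Lemma adjK_covers A C : sorted ltn A -> sorted ltn C -> adjK A C -> covers A C \/ covers C A.
Proof.
move=> sA sC [_ [h|h]].
- by left; case/(interl_same_covers sA sC): h.
- by right; case/(interl_same_covers sC sA): h.
Qed.

Lemma covers_adjK A C : sorted ltn A -> sorted ltn C -> covers A C -> size A = size C ->
  A <> C -> adjK A C /\ adjK C A.
Proof.
move=> sA sC cAC hs hne; have hI : interl_same A C by apply/interl_same_covers.
by split; split=> //; [left | move/esym | right].
Qed.

Lemma adjK_adjI X Y : adjK X Y -> adjI X Y.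
Proof. by move=> [neXY [h|h]]; split=> //; right; right; [left | right; left]. Qed.

(* [osc_le A B m]: the function [rank A - rank B] oscillates by at most [m],
   written without subtraction: [f a - f b <= m] for all [a], [b]. *)
Definition osc_le (A B : seq nat) (m : nat) : Prop :=
  forall a b, rank A a + rank B b <= rank A b + rank B a + m.

Lemma osc_le_sym A B m : osc_le A B m -> osc_le B A m.
Proof. by move=> H a b; have := H b a; lia. Qed.

Lemma osc_le_trans A B C m1 m2 : osc_le A B m1 -> osc_le B C m2 -> osc_le A C (m1 + m2).
Proof. by move=> H1 H2 a b; have := H1 a b; have := H2 a b; lia. Qed.

Lemma covers_osc_le A C : covers A C -> osc_le A C 1.
Proof. by move=> H a b; have := H a; have := H b; lia. Qed.

Lemma covering_osc_le X Y : covers X Y \/ covers Y X -> osc_le X Y 1.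
Proof. by case=> /covers_osc_le //; apply: osc_le_sym. Qed.

(* Zero oscillation forces equal rank functions, since both vanish at 0. *)
Lemma osc_le0_eq A B : sorted ltn A -> sorted ltn B -> osc_le A B 0 -> A = B.
Proof.
move=> sA sB H; apply: rank_inj => // x.
by have := H x 0; have := H 0 x; rewrite !rank0; lia.
Qed.

Lemma cnt_rank A p q : cnt_int A p q = rank A q.+1 - rank A p.
Proof.
case: (leqP p q.+1) => hp; last first.
  rewrite /cnt_int (eq_count (a2 := pred0)) ?count_pred0 => [|x /=]; last by lia.
  by have := rank_mono A (ltnW hp); lia.
suff -> : rank A q.+1 = cnt_int A p q + rank A p by rewrite addnK.
elim: A => [|a A IH] //=; rewrite /cnt_int /rank /= -/(rank A q.+1) -/(rank A p).
by rewrite -/(cnt_int A p q) IH; case: (ltnP a p); case: (leqP a q) => /=; lia.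
Qed.

Lemma osc_le_dsum A B n : osc_le A B n -> dsum A B <= n.
Proof.
move=> H; apply/bigmax_leqP => p _; apply/bigmax_leqP => q _.
rewrite !cnt_rank /absdiff; have := H p q.+1; have := H q.+1 p.
case: (leqP p q.+1) => hp.
  by have := rank_mono A hp; have := rank_mono B hp; lia.
by have := rank_mono A (ltnW hp); have := rank_mono B (ltnW hp); lia.
Qed.

Lemma dsum_interval A B x y : x <= y -> y <= maxn (bound A) (bound B) ->
  absdiff (rank A y - rank A x) (rank B y - rank B x) <= dsum A B.
Proof.
case: y => [|q] hxy hyK; first by rewrite (_ : x = 0) ?subnn /absdiff; lia.
rewrite -!cnt_rank /dsum /=; set M := (maxn _ _).+2.
have hx : x < M by move: hyK; rewrite /M /bound; lia.
have hq : q < M by move: hyK; rewrite /M /bound; lia.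
have row := @leq_bigmax _ (fun p : 'I_M => \max_(r < M) absdiff (cnt_int A p r) (cnt_int B p r))
  (Ordinal hx).
have entry := @leq_bigmax _ (fun r : 'I_M => absdiff (cnt_int A x r) (cnt_int B x r)) (Ordinal hq).
exact: leq_trans entry row.
Qed.

Lemma dsum_osc_le A B n : dsum A B <= n -> osc_le A B n.
Proof.
move=> H a b; set K := maxn (bound A) (bound B).
rewrite (@rank_clamp A K a) ?leq_maxl // (@rank_clamp A K b) ?leq_maxl //.
rewrite (@rank_clamp B K a) ?leq_maxr // (@rank_clamp B K b) ?leq_maxr //.
case: (leqP (minn a K) (minn b K)) => [hab | /ltnW hba].
  have := dsum_interval hab (geq_minr b K); rewrite /absdiff.
  by have := rank_mono A hab; have := rank_mono B hab; lia.
have := dsum_interval hba (geq_minr a K); rewrite /absdiff.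
by have := rank_mono A hba; have := rank_mono B hba; lia.
Qed.

Section Walks.
Variables (V : seq nat -> Prop) (E : seq nat -> seq nat -> Prop).

Lemma walk_ends A B n : walk V E A B n -> V A /\ V B.
Proof.
elim: n A => [|n IH] A /=; first by move=> [hA <-].
by move=> [hA [C [_ /IH[]]]].
Qed.

Lemma walk_snoc A C B m : walk V E A C m -> E C B -> V B -> walk V E A B m.+1.
Proof.
elim: m A => [|m IH] A /= [hA].
  by move=> <- hCB hB; split=> //; exists B.
by move=> [D [hAD hw]] hCB hB; split=> //; exists D; split=> //; apply: IH.
Qed.

Lemma walk_osc_le A B n : (forall X Y, V X -> V Y -> E X Y -> osc_le X Y 1) ->
  walk V E A B n -> osc_le A B n.
Proof.
move=> hE; elim: n A => [|n IH] A /=.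
  by move=> [_ <-] a b; rewrite addn0 addnC.
move=> [hA [C [hAC hw]]]; have [hC _] := walk_ends hw.
by rewrite -add1n; apply: osc_le_trans (hE _ _ hA hC hAC) (IH _ hw).
Qed.

End Walks.

Lemma walk_mono (V V' : seq nat -> Prop) (E E' : seq nat -> seq nat -> Prop) A B n :
  (forall X, V X -> V' X) -> (forall X Y, E X Y -> E' X Y) ->
  walk V E A B n -> walk V' E' A B n.
Proof.
move=> hV hE; elim: n A => [|n IH] A /= [/hV hA]; first by [].
by move=> [C [/hE hAC /IH hw]]; split=> //; exists C.
Qed.

(* The arithmetic heart of the descent step.  With [p, q] the ranks of [A],
   [B] at [t], [pz, qz] those at the maximiser, [a], [b] the memberships of
   [t], and [h], [h'] the indicators of maximality at [t] and [t+1]: the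
   membership chosen for [t] in the new set keeps [rank C = rank A - h]. *)
Lemma indicator_step (p q pz qz : nat) (a b : bool) :
  p + qz <= pz + q -> p + a + qz <= pz + (q + b) ->
  let h := (p + qz == pz + q) in let h' := (p + a + qz == pz + (q + b)) in
  (if h' == h then a else h) + h' = h + a.
Proof.
move=> le0 le1 /=.
by case: eqP; case: eqP => /=; case: a le0 le1 => /=; case: b => /=; lia.
Qed.

Section Descent.
Variables (A B : seq nat) (n x0 : nat).
Hypotheses (vA : vertex A) (vB : vertex B) (oscAB : osc_le A B n.+1).
Hypothesis above_x0 : rank B x0 < rank A x0.

Let K := maxn (bound A) (bound B).

(* A point where [rank A - rank B] is maximal (it is constant beyond [K]). *)
Let z : nat := [arg max_(t > (ord0 : 'I_K.+1)) (rank A t + size B - rank B t)].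

Let z_max t : rank A t + rank B z <= rank A z + rank B t.
Proof.
rewrite (@rank_clamp A K t) ?leq_maxl // (@rank_clamp B K t) ?leq_maxr //.
have ht : minn t K < K.+1 by rewrite ltnS geq_minr.
rewrite /z; case: arg_maxnP => // j _ /(_ (Ordinal ht) isT) /=.
by have := rank_le_size B (minn t K); have := rank_le_size B j; lia.
Qed.

Let z_above : rank B z < rank A z.
Proof. by have := z_max x0; lia. Qed.

Let top t : bool := rank A t + rank B z == rank A z + rank B t.

(* Membership in [C]: the jump of [rank A - top] between [t] and [t+1]. *)
Let inC t : bool := if top t.+1 == top t then t \in A else top t.

Let C : seq nat := [seq t <- iota 0 K | inC t].

Let uA : uniq A := sorted_uniq ltn_trans ltnn (proj1 vA).
Let uB : uniq B := sorted_uniq ltn_trans ltnn (proj1 vB).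

Let sorted_C : sorted ltn C.
Proof. rewrite /C; apply: sorted_filter; [exact: ltn_trans | exact: iota_ltn_sorted]. Qed.

Let mem_C t : (t \in C) = inC t && (t < K).
Proof. by rewrite mem_filter mem_iota add0n. Qed.

Let C_lt_K : all (fun t => t < K) C.
Proof. by apply/allP => t; rewrite mem_C => /andP[]. Qed.

Let rankC_small t : t <= K -> rank C t + top t = rank A t.
Proof.
elim: t => [|t IH] ht; first by rewrite !rank0 /top !rank0; case: eqP => //; lia.
have uC : uniq C := sorted_uniq ltn_trans ltnn sorted_C.
rewrite (rankS _ uC) mem_C ht andbT -addnA.
have le1 := z_max t.+1; rewrite (rankS _ uA) (rankS _ uB) in le1.
have := indicator_step (z_max t) le1.
rewrite /inC /top !(rankS _ uA) !(rankS _ uB) => ->.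
by rewrite addnA IH 1?ltnW.
Qed.

Let rankC t : rank C t + top t = rank A t.
Proof.
case: (leqP t K) => [|/ltnW hKt]; first exact: rankC_small.
have full s : bound s <= K -> rank s t = rank s K.
  by move=> hs; rewrite !rank_bound // (leq_trans hs).
rewrite /top (rank_full C_lt_K hKt) -(rank_full C_lt_K (leqnn K)).
by rewrite !full ?leq_maxl ?leq_maxr //; apply: rankC_small.
Qed.

Lemma descent : exists C, [/\ vertex C, covers A C, A <> C, osc_le C B n &
  (size A = size B -> size C = size A)].
Proof.
have top_lo t : t <= 1 -> top t = false.
  move=> ht; have rank_lo s : all (fun y => 0 < y) s -> rank s t = 0.
    by move=> /rank_pos s1; apply/eqP; rewrite -leqn0 -s1 rank_mono.
  rewrite /top !rank_lo ?add0n ?addn0; [|by case: vB | by case: vA].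
  by apply/negbTE; rewrite neq_ltn z_above.
exists C; split.
- split=> //; apply/allP => -[|t] //; rewrite mem_C /inC !top_lo //=.
  by case: vA => _ /allP pA /andP[/pA].
- by move=> t; have := rankC t; case: (top t) => /=; lia.
- by move=> eAC; have := rankC z; rewrite -eAC /top eqxx; lia.
- move=> a b; have := rankC a; have := rankC b; have := oscAB a b; have := oscAB z b.
  by have := z_max a; have := z_max b; rewrite /top; do 2 case: eqP; lia.
- move=> hs; have := rankC K; rewrite /top (rank_full C_lt_K (leqnn K)).
  rewrite (@rank_bound A K) ?leq_maxl // (@rank_bound B K) ?leq_maxr // -hs.
  by case: eqP; lia.
Qed.

End Descent.

Definition descent_closed (V : seq nat -> Prop) (E : seq nat -> seq nat -> Prop) : Prop :=
  forall A B C, V A -> V B -> vertex C -> covers A C -> A <> C ->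
    (size A = size B -> size C = size A) -> [/\ V C, E A C & E C A].

Section GraphDistance.
Variables (V : seq nat -> Prop) (E : seq nat -> seq nat -> Prop).
Hypothesis V_vertex : forall A, V A -> vertex A.
Hypothesis closedVE : descent_closed V E.
Hypothesis E_osc : forall X Y, V X -> V Y -> E X Y -> osc_le X Y 1.

(* Upper bound: oscillation [n] is bridged by a walk of length at most [n],
   descending from [A] or from [B] according to the sign of [rank A - rank B]. *)
Lemma walk_of_osc_le n A B : V A -> V B -> osc_le A B n -> exists2 m, m <= n & walk V E A B m.
Proof.
elim: n A B => [|n IH] A B hA hB oscAB.
  have [[sA _] [sB _]] := (V_vertex hA, V_vertex hB).
  by exists 0 => //; split=> //; apply: osc_le0_eq.
case: (eqVneq A B) => [<- | neAB]; first by exists 0.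
have [[sA _] [sB _]] := (V_vertex hA, V_vertex hB).
case: (rank_differs sA sB (elimN eqP neAB)) => -[x hx].
  have [C [vC cAC neAC oscCB hs]] := descent (V_vertex hA) (V_vertex hB) oscAB hx.
  have [hC hAC _] := closedVE hA hB vC cAC neAC hs.
  have [m hm hw] := IH C B hC hB oscCB.
  by exists m.+1 => //=; split=> //; exists C.
have [C [vC cBC neBC oscCA hs]] := descent (V_vertex hB) (V_vertex hA) (osc_le_sym oscAB) hx.
have [hC _ hCB] := closedVE hB hA vC cBC neBC hs.
have [m hm hw] := IH A C hA hC (osc_le_sym oscCA).
by exists m.+1 => //; apply: walk_snoc hw hCB hB.
Qed.

Lemma graph_dist_dsum A B : V A -> V B -> graph_dist V E A B (dsum A B).
Proof.
move=> hA hB; have [m hm hw] := walk_of_osc_le hA hB (dsum_osc_le (leqnn _)).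
have shortest m' : walk V E A B m' -> dsum A B <= m'.
  by move=> hw'; apply/osc_le_dsum/(walk_osc_le E_osc hw').
have em : m = dsum A B by apply/eqP; rewrite eqn_leq hm shortest.
by split; first rewrite -em.
Qed.

End GraphDistance.

Lemma descent_closed_I : descent_closed vertex adjI.
Proof.
move=> A B C vA _ vC cAC neAC _.
by have [] := covers_adjI (proj1 vA) (proj1 vC) cAC neAC.
Qed.

Lemma descent_closed_K k : descent_closed (vertexk k) adjK.
Proof.
move=> A B C [vA sA] [_ sB] vC cAC neAC /(_ (etrans sA (esym sB))) sC.
have [] := covers_adjK (proj1 vA) (proj1 vC) cAC (esym sC) neAC.
by split=> //; split=> //; rewrite sC.
Qed.

Lemma adjI_osc_le X Y : vertex X -> vertex Y -> adjI X Y -> osc_le X Y 1.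
Proof. by move=> [sX _] [sY _] /(adjI_covers sX sY)/covering_osc_le. Qed.

Lemma adjK_osc_le k X Y : vertexk k X -> vertexk k Y -> adjK X Y -> osc_le X Y 1.
Proof. by move=> [[sX _] _] [[sY _] _] /(adjK_covers sX sY)/covering_osc_le. Qed.

Theorem theorem5p1 :
  (forall A B : seq nat, vertex A -> vertex B -> dI_is A B (dsum A B)) /\
  (forall (k : nat) (A B : seq nat), vertexk k A -> vertexk k B ->
     walk (vertexk k) adjI A B (dsum A B) /\ dIk_is k A B (dsum A B)).
Proof.
split=> [A B | k A B] hA hB.
  exact: (@graph_dist_dsum vertex adjI (fun _ h => h) descent_closed_I adjI_osc_le).
have distK : dIk_is k A B (dsum A B).
  exact: (@graph_dist_dsum (vertexk k) adjK (fun _ h => proj1 h) (@descent_closed_K k)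
    (@adjK_osc_le k)).
split=> //; apply: walk_mono (proj1 distK) => //; exact: adjK_adjI.
Qed.
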